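(* Let $n\in\mathbb{N}$ and let $u$, $F_n$, $G_{n-1}$, $H_n$ be as follows: $u$ is a smooth complex-valued function on $\mathbb{R}$; $F_n(z,x)=\sum_{j=0}^n f_{n-j}(x)z^j$, $H_n(z,x)=\sum_{j=0}^n h_{n-j}(x)z^j$ with $f_0=h_0=1$, $G_{n-1}(z,x)=\sum_{j=0}^{n-1}g_{n-1-j}(x)z^j$, with smooth coefficients, satisfying for all $z$, $x$: $F_{n,x}=-iu_xF_n-2izG_{n-1}$, $H_{n,x}=iu_xH_n+2izG_{n-1}$, $G_{n-1,x}=i(H_n-F_n)$, and $z^2G_{n-1}^2+zF_nH_n=R_{2n+1}(z)=\prod_{m=0}^{2n}(z-E_m)$ independent of $x$, where $E_0=0$ and $E_0,\dots,E_{2n}$ are pairwise distinct. Let $\mathcal{K}_n$ be the (nonsingular) curve $y^2=R_{2n+1}(z)$ compactified by $P_\infty$. Write $F_n(z,x)=\prod_{j=1}^n(z-\mu_j(x))$, $H_n(z,x)=\prod_{j=1}^n(z-\nu_j(x))$ and set $\hat\mu_j(x)=(\mu_j(x),-\mu_j(x)G_{n-1}(\mu_j(x),x))\in\mathcal{K}_n$, $\hat\nu_j(x)=(\nu_j(x),\nu_j(x)G_{n-1}(\nu_j(x),x))\in\mathcal{K}_n$. Suppose the zeros $\mu_1(x),\dots,\mu_n(x)$ are pairwise distinct for $x\in\Omega$, where $\Omega\subseteq\mathbb{R}$ is an open interval. Then $$\mu_{j,x}(x)=-2i\frac{y(\hat\mu_j(x))}{\prod_{\ell=1,\ell\neq j}^n(\mu_j(x)-\mu_\ell(x))},\qquad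 j=1,\dots,n,\ x\in\Omega,$$ and for any fixed $x_0\in\Omega$ and initial conditions $\hat\mu_j(x_0)\in\mathcal{K}_n$, $j=1,\dots,n$, this initial value problem has a unique solution $\{\hat\mu_j(x)\}_{j=1}^n$ with $\hat\mu_j\in C^\infty(\Omega,\mathcal{K}_n)$. The identical statements hold with $\mu$ replaced by $\nu$ (assuming the $\nu_j(x)$ pairwise distinct on $\Omega$); in particular $\nu_{j,x}(x)=-2i\,y(\hat\nu_j(x))/\prod_{\ell=1,\ell\neq j}^n(\nu_j(x)-\nu_\ell(x))$.
   Context: $y(P)$ denotes the meromorphic function on $\mathcal{K}_n$ with $y^2=R_{2n+1}(z)$; points of $\mathcal{K}_n\setminus\{P_\infty\}$ are written $P=(z,y)$. *)

From Stdlib Require Import Reals.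
From Coquelicot Require Import Coquelicot.

Open Scope C_scope.

Fixpoint csum (m : nat) (a : nat -> C) : C :=
  match m with O => 0 | S k => csum k a + a k end.
Fixpoint cprod (m : nat) (a : nat -> C) : C :=
  match m with O => 1 | S k => cprod k a * a k end.
Fixpoint cpow (z : C) (k : nat) : C :=
  match k with O => 1 | S k' => cpow z k' * z end.

Definition cprod_ne (n j : nat) (a : nat -> C) : C :=
  cprod n (fun k => if Nat.eqb (S k) j then 1 else a (S k)).

Definition cpolyN (c : nat -> R -> C) (m : nat) (z : C) (x : R) : C :=
  csum m (fun j => c (m - 1 - j)%nat x * cpow z j).

Definition Rpoly (n : nat) (E : nat -> C) (z : C) : C :=
  cprod (2 * n + 1) (fun m => z - E m).
Definition dRpoly (n : nat) (E : nat -> C) (z : C) : C :=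
  csum (2 * n + 1) (fun m =>
    cprod (2 * n + 1) (fun k => if Nat.eqb k m then 1 else z - E k)).

Definition smoothR_on (Om : R -> Prop) (g : R -> R) : Prop :=
  forall (k : nat) (x : R), Om x -> ex_derive_n g k x.
Definition smoothC_on (Om : R -> Prop) (g : R -> C) : Prop :=
  smoothR_on Om (fun x => Re (g x)) /\ smoothR_on Om (fun x => Im (g x)).
Definition smoothC (g : R -> C) : Prop := smoothC_on (fun _ => True) g.
Definition is_deriveC (g : R -> C) (x : R) (l : C) : Prop :=
  is_derive (fun t => Re (g t)) x (Re l) /\ is_derive (fun t => Im (g t)) x (Im l).
Definition DeriveC (g : R -> C) (x : R) : C :=
  (Derive (fun t => Re (g t)) x, Derive (fun t => Im (g t)) x).
Definition continuousC_at (g : R -> C) (x : R) : Prop :=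
  continuity_pt (fun t => Re (g t)) x /\ continuity_pt (fun t => Im (g t)) x.

Definition open_rbar_interval (a b : Rbar) (x : R) : Prop :=
  Rbar_lt a x /\ Rbar_lt x b.

(* Points of K_n \ {P_oo} are pairs (z,y) with y^2 = R_{2n+1}(z);
   y(P) = snd P.  A family p_1..p_n of curves x |-> p j x = (z_j(x), y_j(x)).
   The Dubrovin vector field on K_n, written in the affine coordinates (z,y):
     z_j' = -2i y_j / prod_{l<>j} (z_j - z_l),
     y_j' = -i R'(z_j) / prod_{l<>j} (z_j - z_l)
   (the y-equation is the one induced on K_n by y^2 = R(z)). *)
Definition dub_denom (n : nat) (p : nat -> C * C) (j : nat) : C :=
  cprod_ne n j (fun l => fst (p j) - fst (p l)).

Definition dubrovin_solution (n : nat) (E : nat -> C) (Om : R -> Prop)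
    (p : nat -> R -> C * C) : Prop :=
  forall j : nat, (1 <= j <= n)%nat ->
    smoothC_on Om (fun x => fst (p j x)) /\
    smoothC_on Om (fun x => snd (p j x)) /\
    forall x : R, Om x ->
      snd (p j x) * snd (p j x) = Rpoly n E (fst (p j x)) /\
      (forall l : nat, (1 <= l <= n)%nat -> l <> j -> fst (p j x) <> fst (p l x)) /\
      is_deriveC (fun t => fst (p j t)) x
        (- (2 * Ci) * snd (p j x) / dub_denom n (fun k => p k x) j) /\
      is_deriveC (fun t => snd (p j t)) x
        (- Ci * dRpoly n E (fst (p j x)) / dub_denom n (fun k => p k x) j).

Definition lemma_conclusion (n : nat) (E : nat -> C) (Om : R -> Prop)
    (r : nat -> R -> C) (rhat : nat -> R -> C * C) : Prop :=
  (forall j x, (1 <= j <= n)%nat -> Om x ->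
     is_deriveC (r j) x
       (- (2 * Ci) * snd (rhat j x) / cprod_ne n j (fun l => r j x - r l x))) /\
  dubrovin_solution n E Om rhat /\
  (forall (x0 : R) (p : nat -> R -> C * C), Om x0 ->
     dubrovin_solution n E Om p ->
     (forall j, (1 <= j <= n)%nat -> p j x0 = rhat j x0) ->
     forall j x, (1 <= j <= n)%nat -> Om x -> p j x = rhat j x).

(* At a simple zero z = mu_j(x), differentiating
   F(mu_j(x), x) = 0 gives mu_j' prod_{l<>j} (mu_j - mu_l) = - F_x(mu_j) = 2 i mu_j G(mu_j),
   which is the Dubrovin equation since y(hat mu_j) = - mu_j G(mu_j).  This needs only the
   continuity of the mu_l; their smoothness then bootstraps from the equation itself.  The
   equation for y(hat mu_j) follows by differentiating z^2 G^2 + z F H = R in z at mu_j and using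
   G_x(mu_j) = i H(mu_j).  For uniqueness, two solutions stay, over a compact segment, in a region
   where the Dubrovin vector field is Lipschitz, so their squared distance D satisfies
   |D'| <= K D and vanishes by Gronwall. *)

From Stdlib Require Import Reals Lra Lia FunctionalExtensionality.
From Coquelicot Require Import Coquelicot.
Open Scope C_scope.

Lemma cprod_ext m (a b : nat -> C) :
  (forall k, (k < m)%nat -> a k = b k) -> cprod m a = cprod m b.
Proof.
  induction m as [|m IH]; intros Hab; simpl; [reflexivity|].
  f_equal; [apply IH; intros; apply Hab | apply Hab]; lia.
Qed.

Lemma csum_ext m (a b : nat -> C) :
  (forall k, (k < m)%nat -> a k = b k) -> csum m a = csum m b.
Proof.
  induction m as [|m IH]; intros Hab; simpl; [reflexivity|].
  f_equal; [apply IH; intros; apply Hab | apply Hab]; lia.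
Qed.

Lemma csum_mult_r m (a : nat -> C) c : csum m (fun k => a k * c) = csum m a * c.
Proof. induction m as [|m IH]; simpl; [ring|rewrite IH; ring]. Qed.

Lemma csum_plus m (a b : nat -> C) : csum m (fun k => a k + b k) = csum m a + csum m b.
Proof. induction m as [|m IH]; simpl; [ring|rewrite IH; ring]. Qed.

Lemma csum_opp m (a : nat -> C) : csum m (fun k => - a k) = - csum m a.
Proof. induction m as [|m IH]; simpl; [ring|rewrite IH; ring]. Qed.

Lemma csum_0 m : csum m (fun _ => 0) = 0.
Proof. induction m as [|m IH]; simpl; [reflexivity|rewrite IH; ring]. Qed.

Lemma cprod_eq0 m (a : nat -> C) k0 : (k0 < m)%nat -> a k0 = 0 -> cprod m a = 0.
Proof.
  induction m as [|m IH]; intros Hk H0; simpl; [lia|].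
  destruct (Nat.eq_dec k0 m) as [->|Hne]; [rewrite H0; ring|].
  rewrite IH by (assumption || lia); ring.
Qed.

Lemma cprod_neq0 m (a : nat -> C) : (forall k, (k < m)%nat -> a k <> 0) -> cprod m a <> 0.
Proof.
  induction m as [|m IH]; intros Ha; simpl.
  - apply C1_nz.
  - apply Cmult_neq_0; [apply IH; intros; apply Ha|apply Ha]; lia.
Qed.

Lemma cprod_ne_neq0 n j (b : nat -> C) :
  (forall l, (1 <= l <= n)%nat -> l <> j -> b l <> 0) -> cprod_ne n j b <> 0.
Proof.
  intros Hb; apply cprod_neq0; intros k Hk.
  destruct (Nat.eqb_spec (S k) j); [apply C1_nz | apply Hb; lia].
Qed.

Lemma cprod_ne_distinct_neq0 n j (b : nat -> C) :
  (forall l, (1 <= l <= n)%nat -> l <> j -> b j <> b l) -> cprod_ne n j (fun l => b j - b l) <> 0.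
Proof.
  intros Hb; apply cprod_ne_neq0; intros l Hl Hne; apply Cminus_eq_contra, Hb; assumption.
Qed.

Lemma cprod_split_at n j (b : nat -> C) :
  (1 <= j <= n)%nat -> cprod n (fun k => b (S k)) = b j * cprod_ne n j b.
Proof.
  unfold cprod_ne; induction n as [|n IH]; intros Hj; [lia|]; cbn [cprod].
  destruct (Nat.eqb_spec (S n) j) as [<-|Hne].
  - rewrite (cprod_ext n (fun k => if Nat.eqb (S k) (S n) then 1 else b (S k)) (fun k => b (S k)));
      [ring|].
    intros k Hk; destruct (Nat.eqb_spec (S k) (S n)); [lia|reflexivity].
  - rewrite IH by lia; ring.
Qed.

Lemma csum_single m (a : nat -> C) k0 :
  (k0 < m)%nat -> (forall k, (k < m)%nat -> k <> k0 -> a k = 0) -> csum m a = a k0.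
Proof.
  induction m as [|m IH]; intros Hk Ha; simpl; [lia|].
  destruct (Nat.eq_dec k0 m) as [->|Hne].
  - assert (Hz : csum m a = csum m (fun _ => 0)) by (apply csum_ext; intros; apply Ha; lia).
    rewrite Hz, csum_0; ring.
  - rewrite IH, (Ha m) by (lia || (intros; apply Ha; lia)); ring.
Qed.

Lemma cprod_at_root n j (b : nat -> C) :
  (1 <= j <= n)%nat -> cprod n (fun k => b j - b (S k)) = 0.
Proof.
  intros Hj; apply (cprod_eq0 n _ (pred j)); [lia|].
  replace (S (pred j)) with j by lia; ring.
Qed.

Lemma cprod_derive_at_root n j (c : C) (r : nat -> C) :
  (1 <= j <= n)%nat -> c = r j ->
  csum n (fun k => cprod n (fun k' => if Nat.eqb k' k then 1 else c - r (S k'))) =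
  cprod_ne n j (fun l => c - r l).
Proof.
  intros Hj ->; rewrite (csum_single n _ (pred j)); [| lia |].
  - apply cprod_ext; intros k Hk.
    destruct (Nat.eqb_spec k (pred j)), (Nat.eqb_spec (S k) j); reflexivity || lia.
  - intros k Hk Hne; apply (cprod_eq0 n _ (pred j)); [lia|].
    destruct (Nat.eqb_spec (pred j) k); [lia|].
    replace (S (pred j)) with j by lia; ring.
Qed.

(** * Calculus of complex-valued functions of a real variable *)

Lemma is_deriveC_eq_val (g : R -> C) x l l' :
  is_deriveC g x l -> l = l' -> is_deriveC g x l'.
Proof. intros ? <-; assumption. Qed.

Lemma is_deriveC_ext_loc (f g : R -> C) x l :
  locally x (fun t => f t = g t) -> is_deriveC f x l -> is_deriveC g x l.
Proof.
  intros Hfg [Hre Him]; split; eapply is_derive_ext_loc; eauto;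
    eapply filter_imp; eauto; intros t ->; reflexivity.
Qed.

Lemma is_deriveC_ext (f g : R -> C) x l :
  (forall t, f t = g t) -> is_deriveC f x l -> is_deriveC g x l.
Proof. intros Hfg. apply is_deriveC_ext_loc, filter_forall, Hfg. Qed.

Lemma is_deriveC_unique (g : R -> C) x l1 l2 :
  is_deriveC g x l1 -> is_deriveC g x l2 -> l1 = l2.
Proof.
  intros [Hre1 Him1] [Hre2 Him2].
  apply is_derive_unique in Hre1, Him1, Hre2, Him2.
  unfold Re, Im in *; apply injective_projections; congruence.
Qed.

Lemma is_deriveC_const (c : C) x : is_deriveC (fun _ => c) x 0.
Proof. split; simpl; exact (is_derive_const _ x). Qed.

Lemma is_deriveC_RtoC x : is_deriveC (fun t => RtoC t) x 1.
Proof. split; simpl; [exact (is_derive_id x) | exact (is_derive_const _ x)]. Qed.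

Lemma is_deriveC_plus (f g : R -> C) x a b :
  is_deriveC f x a -> is_deriveC g x b -> is_deriveC (fun t => f t + g t) x (a + b).
Proof.
  intros [Hfr Hfi] [Hgr Hgi]; split;
    [exact (is_derive_plus _ _ _ _ _ Hfr Hgr) | exact (is_derive_plus _ _ _ _ _ Hfi Hgi)].
Qed.

Lemma is_deriveC_opp (f : R -> C) x a :
  is_deriveC f x a -> is_deriveC (fun t => - f t) x (- a).
Proof.
  intros [Hfr Hfi]; split; [exact (is_derive_opp _ _ _ Hfr) | exact (is_derive_opp _ _ _ Hfi)].
Qed.

Lemma is_deriveC_minus (f g : R -> C) x a b :
  is_deriveC f x a -> is_deriveC g x b -> is_deriveC (fun t => f t - g t) x (a - b).
Proof. intros; apply is_deriveC_plus, is_deriveC_opp; assumption. Qed.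

Lemma is_derive_Rmult (f g : R -> R) x a b :
  is_derive f x a -> is_derive g x b ->
  is_derive (fun t => f t * g t)%R x (a * g x + f x * b)%R.
Proof. intros Hf Hg. apply (is_derive_mult f g x a b Hf Hg Rmult_comm). Qed.

Lemma is_deriveC_mult (f g : R -> C) x a b :
  is_deriveC f x a -> is_deriveC g x b ->
  is_deriveC (fun t => f t * g t) x (a * g x + f x * b).
Proof.
  intros [Hfr Hfi] [Hgr Hgi]; split.
  - replace (Re (a * g x + f x * b)) with
      ((Re a * Re (g x) + Re (f x) * Re b) - (Im a * Im (g x) + Im (f x) * Im b))%R
      by (unfold Re, Im; simpl; ring).
    exact (is_derive_minus _ _ _ _ _
             (is_derive_Rmult _ _ _ _ _ Hfr Hgr) (is_derive_Rmult _ _ _ _ _ Hfi Hgi)).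
  - replace (Im (a * g x + f x * b)) with
      ((Re a * Im (g x) + Re (f x) * Im b) + (Im a * Re (g x) + Im (f x) * Re b))%R
      by (unfold Re, Im; simpl; ring).
    exact (is_derive_plus _ _ _ _ _
             (is_derive_Rmult _ _ _ _ _ Hfr Hgi) (is_derive_Rmult _ _ _ _ _ Hfi Hgr)).
Qed.

Lemma is_deriveC_inv (g : R -> C) x a :
  is_deriveC g x a -> g x <> 0 ->
  is_deriveC (fun t => / g t) x (- a * / g x * / g x).
Proof.
  intros [Hgr Hgi] Hnz.
  set (N := fun t => (fst (g t) ^ 2 + snd (g t) ^ 2)%R).
  set (dN := (INR 2 * Re a * fst (g x) ^ 1 + INR 2 * Im a * snd (g x) ^ 1)%R).
  assert (HN : (N x <> 0)%R).
  { intros HN0; apply Hnz; unfold N in HN0.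
    apply injective_projections; simpl; nra. }
  assert (HdN : is_derive N x dN).
  { exact (is_derive_plus _ _ _ _ _ (is_derive_pow _ 2 _ _ Hgr) (is_derive_pow _ 2 _ _ Hgi)). }
  unfold N in HN; split.
  - replace (Re (- a * / g x * / g x)) with ((Re a * N x - fst (g x) * dN) / N x ^ 2)%R
      by (unfold N, dN, Re, Im; simpl; field; intros E; apply HN; rewrite <- E; ring).
    exact (is_derive_div _ _ _ _ _ Hgr HdN HN).
  - replace (Im (- a * / g x * / g x)) with ((- Im a * N x - - snd (g x) * dN) / N x ^ 2)%R
      by (unfold N, dN, Re, Im; simpl; field; intros E; apply HN; rewrite <- E; ring).
    exact (is_derive_div _ _ _ _ _ (is_derive_opp _ _ _ Hgi) HdN HN).
Qed.

Lemma is_deriveC_csum m (a : nat -> R -> C) (da : nat -> C) x :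
  (forall k, (k < m)%nat -> is_deriveC (a k) x (da k)) ->
  is_deriveC (fun t => csum m (fun k => a k t)) x (csum m da).
Proof.
  induction m as [|m IH]; intros Ha; simpl.
  - apply is_deriveC_const.
  - apply is_deriveC_plus; [apply IH; intros; apply Ha|apply Ha]; lia.
Qed.

Lemma is_deriveC_cprod m (a : nat -> R -> C) (da : nat -> C) x :
  (forall k, (k < m)%nat -> is_deriveC (a k) x (da k)) ->
  is_deriveC (fun t => cprod m (fun k => a k t)) x
    (csum m (fun k => cprod m (fun k' => if Nat.eqb k' k then da k' else a k' x))).
Proof.
  induction m as [|m IH]; intros Ha; simpl.
  - apply is_deriveC_const.
  - eapply is_deriveC_eq_val.
    { apply is_deriveC_mult; [apply IH; intros; apply Ha|apply Ha]; lia. }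
    rewrite Nat.eqb_refl, <- csum_mult_r.
    rewrite (cprod_ext m (fun k' => if Nat.eqb k' m then da k' else a k' x)
                         (fun k' => a k' x))
      by (intros k' Hk'; destruct (Nat.eqb_spec k' m); [lia|reflexivity]).
    f_equal; apply csum_ext; intros k Hk.
    destruct (Nat.eqb_spec m k); [lia|reflexivity].
Qed.

Lemma is_deriveC_cpow (w : R -> C) w' x k :
  is_deriveC w x w' ->
  is_deriveC (fun t => cpow (w t) k) x (INR k * cpow (w x) (pred k) * w').
Proof.
  intros Hw; induction k as [|k IH]; cbn [cpow].
  - eapply is_deriveC_eq_val; [apply is_deriveC_const|].
    change (INR 0) with 0%R; ring.
  - eapply is_deriveC_eq_val; [apply is_deriveC_mult; eassumption|].
    rewrite S_INR, RtoC_plus.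
    destruct k as [|k]; cbn [pred cpow]; [change (INR 0) with 0%R; ring|ring].
Qed.

Lemma is_derive_continuity_pt (f : R -> R) t l : is_derive f t l -> continuity_pt f t.
Proof.
  intros H; apply continuity_pt_filterlim, (@ex_derive_continuous R_AbsRing R_NormedModule).
  exists l; exact H.
Qed.

Lemma is_deriveC_continuous (g : R -> C) x l : is_deriveC g x l -> continuousC_at g x.
Proof.
  intros [Hr Hi]; split; eapply is_derive_continuity_pt; eassumption.
Qed.

Lemma is_derive_mult_vanishing (phi psi : R -> R) x a :
  phi x = 0%R -> is_derive phi x a -> continuity_pt psi x ->
  is_derive (fun t => phi t * psi t)%R x (a * psi x)%R.
Proof.
  intros H0 Hphi Hpsi.
  apply is_derive_Reals, uniqueness_step3, is_lim_Reals.
  apply is_derive_Reals, uniqueness_step2, is_lim_Reals in Hphi.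
  assert (Hshift : is_lim (fun h => psi (x + h)%R) 0 (psi x)).
  { apply (is_lim_comp psi (fun h => x + h)%R 0 (psi x) x).
    - apply is_lim_continuity, Hpsi.
    - replace (Finite x) with (Finite ((fun h => x + h) 0))%R by (f_equal; simpl; ring).
      apply is_lim_continuity, continuity_pt_plus;
        [apply continuity_pt_const; intros ? ?; reflexivity | apply continuity_pt_id].
    - exists (mkposreal 1 Rlt_0_1); intros h _ Hh Hxh.
      apply Hh, (Rplus_eq_reg_l x); rewrite Rplus_0_r; injection Hxh; trivial. }
  apply (is_lim_ext (fun h => (phi (x + h) - phi x) / h * psi (x + h))%R).
  - intros h; rewrite H0; unfold Rdiv; ring.
  - exact (is_lim_mult _ _ _ _ _ Hphi Hshift I).
Qed.

Lemma is_deriveC_mult_vanishing (phi psi : R -> C) x a :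
  phi x = 0 -> is_deriveC phi x a -> continuousC_at psi x ->
  is_deriveC (fun t => phi t * psi t) x (a * psi x).
Proof.
  intros H0 [Hr Hi] [Cr Ci'].
  assert (H0r : Re (phi x) = 0%R) by (rewrite H0; reflexivity).
  assert (H0i : Im (phi x) = 0%R) by (rewrite H0; reflexivity).
  split.
  - exact (is_derive_minus _ _ _ _ _ (is_derive_mult_vanishing _ _ _ _ H0r Hr Cr)
                                      (is_derive_mult_vanishing _ _ _ _ H0i Hi Ci')).
  - exact (is_derive_plus _ _ _ _ _ (is_derive_mult_vanishing _ _ _ _ H0r Hr Ci')
                                     (is_derive_mult_vanishing _ _ _ _ H0i Hi Cr)).
Qed.

Lemma smoothC_is_deriveC (g : R -> C) x : smoothC g -> is_deriveC g x (DeriveC g x).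
Proof.
  intros [Hr Hi]; split; apply Derive_correct; [apply (Hr 1%nat) | apply (Hi 1%nat)]; exact I.
Qed.

Lemma continuousC_at_const (c : C) x : continuousC_at (fun _ => c) x.
Proof. split; apply continuity_pt_const; intros ? ?; reflexivity. Qed.

Lemma continuousC_at_plus (f g : R -> C) x :
  continuousC_at f x -> continuousC_at g x -> continuousC_at (fun t => f t + g t) x.
Proof.
  intros [Hfr Hfi] [Hgr Hgi];
    split; [exact (continuity_pt_plus _ _ _ Hfr Hgr) | exact (continuity_pt_plus _ _ _ Hfi Hgi)].
Qed.

Lemma continuousC_at_opp (f : R -> C) x :
  continuousC_at f x -> continuousC_at (fun t => - f t) x.
Proof.
  intros [Hfr Hfi]; split; [exact (continuity_pt_opp _ _ Hfr) | exact (continuity_pt_opp _ _ Hfi)].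
Qed.

Lemma continuousC_at_minus (f g : R -> C) x :
  continuousC_at f x -> continuousC_at g x -> continuousC_at (fun t => f t - g t) x.
Proof. intros; apply continuousC_at_plus, continuousC_at_opp; assumption. Qed.

Lemma continuousC_at_mult (f g : R -> C) x :
  continuousC_at f x -> continuousC_at g x -> continuousC_at (fun t => f t * g t) x.
Proof.
  intros [Hfr Hfi] [Hgr Hgi]; split.
  - exact (continuity_pt_minus _ _ _ (continuity_pt_mult _ _ _ Hfr Hgr)
                                     (continuity_pt_mult _ _ _ Hfi Hgi)).
  - exact (continuity_pt_plus _ _ _ (continuity_pt_mult _ _ _ Hfr Hgi)
                                    (continuity_pt_mult _ _ _ Hfi Hgr)).
Qed.

Lemma continuity_pt_norm2 (g : R -> C) x :
  continuousC_at g x -> continuity_pt (fun t => fst (g t) ^ 2 + snd (g t) ^ 2)%R x.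
Proof.
  intros [Hr Hi].
  apply (continuity_pt_ext (fun t => Re (g t) * Re (g t) + Im (g t) * Im (g t))%R);
    [intros; unfold Re, Im; ring|].
  exact (continuity_pt_plus _ _ _ (continuity_pt_mult _ _ _ Hr Hr) (continuity_pt_mult _ _ _ Hi Hi)).
Qed.

Lemma continuousC_at_inv (g : R -> C) x :
  continuousC_at g x -> g x <> 0 -> continuousC_at (fun t => / g t) x.
Proof.
  intros Hg Hnz.
  assert (HN : (fst (g x) ^ 2 + snd (g x) ^ 2 <> 0)%R).
  { intros HN0; apply Hnz, injective_projections; simpl; nra. }
  pose proof (continuity_pt_norm2 g x Hg) as Hcn.
  destruct Hg as [Hr Hi]; split.
  - exact (continuity_pt_div _ _ _ Hr Hcn HN).
  - exact (continuity_pt_div _ _ _ (continuity_pt_opp _ _ Hi) Hcn HN).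
Qed.

Lemma continuousC_at_cprod m (a : nat -> R -> C) x :
  (forall k, (k < m)%nat -> continuousC_at (a k) x) ->
  continuousC_at (fun t => cprod m (fun k => a k t)) x.
Proof.
  induction m as [|m IH]; intros Ha; simpl; [apply continuousC_at_const|].
  apply continuousC_at_mult; [apply IH; intros; apply Ha|apply Ha]; lia.
Qed.

Lemma continuousC_at_cprod_ne n j (b : nat -> R -> C) x :
  (forall l, (1 <= l <= n)%nat -> continuousC_at (b l) x) ->
  continuousC_at (fun t => cprod_ne n j (fun l => b l t)) x.
Proof.
  intros Hb; apply (continuousC_at_cprod n (fun k t => if Nat.eqb (S k) j then 1 else b (S k) t)).
  intros k Hk; destruct (Nat.eqb (S k) j); [apply continuousC_at_const | apply Hb; lia].
Qed.

Lemma continuity_pt_Cmod (g : R -> C) x :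
  continuousC_at g x -> continuity_pt (fun t => Cmod (g t)) x.
Proof.
  intros Hg; unfold Cmod.
  apply (continuity_pt_comp (fun t => fst (g t) ^ 2 + snd (g t) ^ 2)%R sqrt);
    [apply continuity_pt_norm2, Hg|].
  apply continuity_pt_sqrt; nra.
Qed.

Lemma locally_neq0 (f : R -> C) x :
  continuousC_at f x -> f x <> 0 -> locally x (fun t => f t <> 0).
Proof.
  intros [Hr Hi] Hnz.
  destruct (Req_dec (Re (f x)) 0) as [Hr0|Hr0]; [destruct (Req_dec (Im (f x)) 0) as [Hi0|Hi0]|].
  - exfalso; apply Hnz, injective_projections; assumption.
  - apply (filter_imp (fun t => Im (f t) <> 0%R)); [intros t Ht E; apply Ht; rewrite E; reflexivity|].
    exact (locally_pt_comp (fun y => y <> 0%R) _ x (open_neq 0 _ Hi0) Hi).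
  - apply (filter_imp (fun t => Re (f t) <> 0%R)); [intros t Ht E; apply Ht; rewrite E; reflexivity|].
    exact (locally_pt_comp (fun y => y <> 0%R) _ x (open_neq 0 _ Hr0) Hr).
Qed.

(** * Functions of class C^k *)

Fixpoint CkC_on (Om : R -> Prop) (k : nat) (g : R -> C) : Prop :=
  match k with
  | O => True
  | S k => exists g', (forall x, Om x -> is_deriveC g x (g' x)) /\ CkC_on Om k g'
  end.

Section Ck_closure.

Variable Om : R -> Prop.

Lemma CkC_on_weaken k g : CkC_on Om (S k) g -> CkC_on Om k g.
Proof.
  revert g; induction k as [|k IH]; intros g [g' [Hd Hg']]; [exact I|].
  exists g'; split; [exact Hd | apply IH, Hg'].
Qed.

Lemma CkC_on_ext k (f g : R -> C) : (forall t, f t = g t) -> CkC_on Om k f -> CkC_on Om k g.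
Proof.
  destruct k as [|k]; intros Hfg; [trivial|].
  intros [f' [Hd Hf']]; exists f'; split; [|exact Hf'].
  intros x Hx; apply (is_deriveC_ext f), Hd; assumption.
Qed.

Lemma CkC_on_const k (c : C) : CkC_on Om k (fun _ => c).
Proof.
  revert c; induction k as [|k IH]; intros c; [exact I|].
  exists (fun _ => 0); split; [intros; apply is_deriveC_const | apply IH].
Qed.

Lemma CkC_on_plus k (f g : R -> C) :
  CkC_on Om k f -> CkC_on Om k g -> CkC_on Om k (fun t => f t + g t).
Proof.
  revert f g; induction k as [|k IH]; [trivial|].
  intros f g [f' [Hf Hf']] [g' [Hg Hg']].
  exists (fun t => f' t + g' t); split; [intros; apply is_deriveC_plus; auto | auto].
Qed.

Lemma CkC_on_opp k (f : R -> C) : CkC_on Om k f -> CkC_on Om k (fun t => - f t).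
Proof.
  revert f; induction k as [|k IH]; [trivial|].
  intros f [f' [Hf Hf']].
  exists (fun t => - f' t); split; [intros; apply is_deriveC_opp; auto | auto].
Qed.

Lemma CkC_on_minus k (f g : R -> C) :
  CkC_on Om k f -> CkC_on Om k g -> CkC_on Om k (fun t => f t - g t).
Proof. intros; apply CkC_on_plus, CkC_on_opp; assumption. Qed.

Lemma CkC_on_mult k (f g : R -> C) :
  CkC_on Om k f -> CkC_on Om k g -> CkC_on Om k (fun t => f t * g t).
Proof.
  revert f g; induction k as [|k IH]; [trivial|].
  intros f g Hf Hg.
  pose proof (CkC_on_weaken _ _ Hf) as Hfk; pose proof (CkC_on_weaken _ _ Hg) as Hgk.
  destruct Hf as [f' [Hdf Hf']], Hg as [g' [Hdg Hg']].
  exists (fun t => f' t * g t + f t * g' t); split.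
  - intros; apply is_deriveC_mult; auto.
  - apply CkC_on_plus; apply IH; assumption.
Qed.

Lemma CkC_on_inv k (g : R -> C) :
  (forall x, Om x -> g x <> 0) -> CkC_on Om k g -> CkC_on Om k (fun t => / g t).
Proof.
  intros Hnz; revert g Hnz; induction k as [|k IH]; [trivial|].
  intros g Hnz Hg.
  pose proof (CkC_on_weaken _ _ Hg) as Hgk.
  destruct Hg as [g' [Hdg Hg']].
  exists (fun t => - g' t * / g t * / g t); split.
  - intros; apply is_deriveC_inv; auto.
  - repeat apply CkC_on_mult; auto; apply CkC_on_opp, Hg'.
Qed.

Lemma CkC_on_div k (f g : R -> C) :
  (forall x, Om x -> g x <> 0) -> CkC_on Om k f -> CkC_on Om k g ->
  CkC_on Om k (fun t => f t / g t).
Proof. intros; apply CkC_on_mult; [|apply CkC_on_inv]; assumption. Qed.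

Lemma CkC_on_csum k m (a : nat -> R -> C) :
  (forall i, (i < m)%nat -> CkC_on Om k (a i)) -> CkC_on Om k (fun t => csum m (fun i => a i t)).
Proof.
  induction m as [|m IH]; intros Ha; simpl; [apply CkC_on_const|].
  apply CkC_on_plus; [apply IH; intros; apply Ha|apply Ha]; lia.
Qed.

Lemma CkC_on_cprod k m (a : nat -> R -> C) :
  (forall i, (i < m)%nat -> CkC_on Om k (a i)) -> CkC_on Om k (fun t => cprod m (fun i => a i t)).
Proof.
  induction m as [|m IH]; intros Ha; simpl; [apply CkC_on_const|].
  apply CkC_on_mult; [apply IH; intros; apply Ha|apply Ha]; lia.
Qed.

Lemma CkC_on_cpow k (w : R -> C) j : CkC_on Om k w -> CkC_on Om k (fun t => cpow (w t) j).
Proof.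
  intros Hw; induction j as [|j IH]; simpl; [apply CkC_on_const | apply CkC_on_mult; assumption].
Qed.

Lemma smoothC_on_CkC_on (g : R -> C) : smoothC_on Om g -> forall k, CkC_on Om k g.
Proof.
  intros [Hr Hi].
  assert (Hder : forall k m, CkC_on Om k
    (fun t => (Derive_n (fun s => Re (g s)) m t, Derive_n (fun s => Im (g s)) m t))).
  { induction k as [|k IH]; intros m; [exact I|].
    exists (fun t => (Derive_n (fun s => Re (g s)) (S m) t, Derive_n (fun s => Im (g s)) (S m) t)).
    split; [|apply IH].
    intros x Hx; split; apply Derive_correct; [apply (Hr (S m)) | apply (Hi (S m))]; exact Hx. }
  intros k; refine (CkC_on_ext k _ g _ (Hder k 0%nat)).
  intros t; apply injective_projections; reflexivity.
Qed.

Lemma ex_derive_n_S_of_is_derive (f f' : R -> R) k :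
  open Om -> (forall x, Om x -> is_derive f x (f' x)) ->
  (forall x, Om x -> ex_derive_n f' k x) -> forall x, Om x -> ex_derive_n f (S k) x.
Proof.
  intros HO Hf Hf' x Hx; destruct k as [|k].
  - exists (f' x); apply Hf, Hx.
  - apply (ex_derive_ext_loc (Derive_n f' k)); [|exact (Hf' x Hx)].
    apply (filter_imp Om); [|exact (HO x Hx)].
    intros y Hy; transitivity (Derive_n (Derive_n f 1) k y).
    + apply Derive_n_ext_loc; apply (filter_imp Om); [|exact (HO y Hy)].
      intros z Hz; symmetry; apply is_derive_unique, Hf, Hz.
    + rewrite Derive_n_comp, Nat.add_1_r; reflexivity.
Qed.

Lemma CkC_on_smoothC_on (g : R -> C) : open Om -> (forall k, CkC_on Om k g) -> smoothC_on Om g.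
Proof.
  intros HO Hg.
  assert (Hs : forall k g, CkC_on Om k g -> forall x, Om x ->
    ex_derive_n (fun t => Re (g t)) k x /\ ex_derive_n (fun t => Im (g t)) k x).
  { induction k as [|k IH]; intros h Hh x Hx; [split; exact I|].
    destruct Hh as [h' [Hd Hh']].
    split.
    - apply (ex_derive_n_S_of_is_derive _ (fun t => Re (h' t))); [exact HO| | |exact Hx].
      + intros y Hy; apply Hd, Hy.
      + intros y Hy; apply (IH h' Hh' y Hy).
    - apply (ex_derive_n_S_of_is_derive _ (fun t => Im (h' t))); [exact HO| | |exact Hx].
      + intros y Hy; apply Hd, Hy.
      + intros y Hy; apply (IH h' Hh' y Hy). }
  split; intros k x Hx; apply (Hs k g (Hg k) x Hx).
Qed.

End Ck_closure.

Lemma smoothC_opp (g : R -> C) : smoothC g -> smoothC (fun x => - g x).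
Proof.
  intros Hg; apply CkC_on_smoothC_on; [apply open_true|].
  intros k; apply CkC_on_opp, smoothC_on_CkC_on, Hg.
Qed.

Definition cpolyN_dz (c : nat -> R -> C) (m : nat) (z : C) (x : R) : C :=
  csum m (fun i => c (m - 1 - i)%nat x * (INR i * cpow z (pred i))).

Lemma is_deriveC_cpolyN_comp (c dc : nat -> R -> C) m (w : R -> C) w' x :
  (forall k, is_deriveC (c k) x (dc k x)) -> is_deriveC w x w' ->
  is_deriveC (fun t => cpolyN c m (w t) t) x (cpolyN dc m (w x) x + cpolyN_dz c m (w x) x * w').
Proof.
  intros Hc Hw; unfold cpolyN, cpolyN_dz; eapply is_deriveC_eq_val.
  - apply (is_deriveC_csum m (fun i t => c (m - 1 - i)%nat t * cpow (w t) i)); intros.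
    apply is_deriveC_mult; [apply Hc | apply is_deriveC_cpow, Hw].
  - rewrite <- csum_mult_r, <- csum_plus; apply csum_ext; intros; ring.
Qed.

Lemma is_deriveC_cpolyN_x (c dc : nat -> R -> C) m z x :
  (forall k, is_deriveC (c k) x (dc k x)) ->
  is_deriveC (fun t => cpolyN c m z t) x (cpolyN dc m z x).
Proof.
  intros Hc; eapply is_deriveC_eq_val.
  - apply (is_deriveC_cpolyN_comp c dc m (fun _ => z)); [exact Hc | apply is_deriveC_const].
  - ring.
Qed.

Lemma is_deriveC_cpolyN_z (c : nat -> R -> C) m z x :
  is_deriveC (fun s => cpolyN c m (z + RtoC s) x) 0%R (cpolyN_dz c m z x).
Proof.
  eapply is_deriveC_eq_val.
  - apply (is_deriveC_cpolyN_comp (fun k _ => c k x) (fun _ _ => 0) m (fun s => z + RtoC s) 1).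
    + intros; apply is_deriveC_const.
    + eapply is_deriveC_eq_val; [apply is_deriveC_plus; [apply is_deriveC_const | apply is_deriveC_RtoC]|].
      ring.
  - replace (z + RtoC 0) with z by ring; unfold cpolyN.
    rewrite (csum_ext m _ (fun _ => 0)), csum_0, Cplus_0_l, Cmult_1_r by (intros; ring).
    reflexivity.
Qed.

Lemma is_deriveC_cprod_z m (c : C) (e : nat -> C) :
  is_deriveC (fun s => cprod m (fun k => c + RtoC s - e k)) 0%R
    (csum m (fun k => cprod m (fun k' => if Nat.eqb k' k then 1 else c - e k'))).
Proof.
  eapply is_deriveC_eq_val.
  - apply (is_deriveC_cprod m (fun k s => c + RtoC s - e k) (fun _ => 1)); intros.
    eapply is_deriveC_eq_val.
    + apply is_deriveC_minus; [apply is_deriveC_plus|];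
        [apply is_deriveC_const | apply is_deriveC_RtoC | apply is_deriveC_const].
    + ring.
  - apply csum_ext; intros k Hk; apply cprod_ext; intros k' Hk'.
    destruct (Nat.eqb k' k); [reflexivity|ring].
Qed.

Lemma CkC_on_cpolyN_comp Om k (c : nat -> R -> C) m (w : R -> C) :
  (forall i, smoothC (c i)) -> CkC_on Om k w -> CkC_on Om k (fun x => cpolyN c m (w x) x).
Proof.
  intros Hc Hw; apply (CkC_on_csum Om k m (fun i x => c (m - 1 - i)%nat x * cpow (w x) i)).
  intros i Hi; apply CkC_on_mult; [|apply CkC_on_cpow, Hw].
  destruct (Hc (m - 1 - i)%nat) as [Hr Him].
  apply smoothC_on_CkC_on; split; intros j y _; [apply Hr | apply Him]; exact I.
Qed.

Lemma cpolyN_opp (g : nat -> R -> C) n z x :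
  cpolyN (fun k t => - g k t) n z x = - cpolyN g n z x.
Proof. unfold cpolyN; rewrite <- csum_opp; apply csum_ext; intros; ring. Qed.

(** * The zeros of F satisfy the Dubrovin system *)

Lemma is_deriveC_simple_root n (r : nat -> R -> C) j x dA :
  (1 <= j <= n)%nat ->
  (forall l, (1 <= l <= n)%nat -> continuousC_at (r l) x) ->
  (forall l, (1 <= l <= n)%nat -> l <> j -> r j x <> r l x) ->
  is_deriveC (fun t => cprod n (fun k => r j x - r (S k) t)) x dA ->
  is_deriveC (r j) x (- dA / cprod_ne n j (fun l => r j x - r l x)).
Proof.
  intros Hj Hc Hd HA.
  set (c := r j x); set (P := fun t => cprod_ne n j (fun l => c - r l t)).
  assert (HP : P x <> 0) by exact (cprod_ne_distinct_neq0 n j (fun l => r l x) Hd).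
  assert (HcP : continuousC_at P x).
  { apply (continuousC_at_cprod_ne n j (fun l t => c - r l t)); intros.
    apply continuousC_at_minus; [apply continuousC_at_const | apply Hc; assumption]. }
  assert (HA0 : cprod n (fun k => c - r (S k) x) = 0) by exact (cprod_at_root n j (fun l => r l x) Hj).
  (* Near x, r j t = c - A t / P t where A t = prod_k (c - r (S k) t) vanishes at x,
     so P only needs to be continuous. *)
  eapply is_deriveC_eq_val.
  { apply (is_deriveC_ext_loc (fun t => c - cprod n (fun k => c - r (S k) t) * / P t)).
    - apply (filter_imp (fun t => P t <> 0)); [|apply locally_neq0; assumption].
      intros t Ht; rewrite (cprod_split_at n j (fun l => c - r l t)) by exact Hj.
      fold (P t); field; exact Ht.
    - apply is_deriveC_minus; [apply is_deriveC_const|].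
      apply is_deriveC_mult_vanishing; [exact HA0 | exact HA | apply continuousC_at_inv; assumption]. }
  unfold Cdiv, P; ring.
Qed.

Definition dubrovin_velocity (n : nat) (g r : nat -> R -> C) (j : nat) (x : R) : C :=
  - (2 * Ci) * (- r j x * cpolyN g n (r j x) x) / cprod_ne n j (fun l => r j x - r l x).

Section Dubrovin_zeros.

Variables (n : nat) (E : nat -> C) (r g h : nat -> R -> C) (alpha : R -> C) (Om : R -> Prop).

Hypothesis g_smooth : forall k, smoothC (g k).
Hypothesis F_x : forall z x,
  is_deriveC (fun t => cprod n (fun k => z - r (S k) t)) x
    (alpha x * cprod n (fun k => z - r (S k) x) - 2 * Ci * z * cpolyN g n z x).
Hypothesis G_x : forall z x,
  is_deriveC (fun t => cpolyN g n z t) x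
    (Ci * (cpolyN h (S n) z x - cprod n (fun k => z - r (S k) x))).
Hypothesis curve : forall z x,
  z * z * cpolyN g n z x * cpolyN g n z x + z * cprod n (fun k => z - r (S k) x) * cpolyN h (S n) z x
  = Rpoly n E z.
Hypothesis r_cont : forall j x, (1 <= j <= n)%nat -> Om x -> continuousC_at (r j) x.
Hypothesis r_distinct : forall j l x,
  (1 <= j <= n)%nat -> (1 <= l <= n)%nat -> j <> l -> Om x -> r j x <> r l x.

Lemma zeros_is_deriveC j x :
  (1 <= j <= n)%nat -> Om x -> is_deriveC (r j) x (dubrovin_velocity n g r j x).
Proof.
  intros Hj Hx; eapply is_deriveC_eq_val.
  - apply (is_deriveC_simple_root n r j x); [exact Hj | | | apply F_x].
    + intros l Hl; apply r_cont; assumption.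
    + intros l Hl Hne; apply r_distinct; auto.
  - unfold dubrovin_velocity; rewrite (cprod_at_root n j (fun l => r l x)) by exact Hj.
    unfold Cdiv; ring.
Qed.

Lemma zeros_CkC_on k j : (1 <= j <= n)%nat -> CkC_on Om k (r j).
Proof.
  revert j; induction k as [|k IH]; intros j Hj; [exact I|].
  exists (dubrovin_velocity n g r j); split; [intros; apply zeros_is_deriveC; assumption|].
  apply CkC_on_div.
  - intros x Hx; apply cprod_ne_distinct_neq0 with (b := fun l => r l x).
    intros l Hl Hne; apply r_distinct; auto.
  - apply CkC_on_mult; [apply CkC_on_const|].
    apply CkC_on_mult; [apply CkC_on_opp, IH, Hj | apply CkC_on_cpolyN_comp, IH, Hj; exact g_smooth].
  - apply (CkC_on_cprod Om k n (fun i x => if Nat.eqb (S i) j then 1 else r j x - r (S i) x)).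
    intros i Hi; destruct (Nat.eqb (S i) j); [apply CkC_on_const|].
    apply CkC_on_minus; apply IH; lia.
Qed.

(* The z-derivative is taken along the real line s |-> c + s: since the curve identity holds
   for every z, this is enough to differentiate it. *)
Lemma curve_dz_at_zero j x c :
  (1 <= j <= n)%nat -> c = r j x ->
  2 * c * cpolyN g n c x * cpolyN g n c x + 2 * (c * c) * cpolyN g n c x * cpolyN_dz g n c x
  + c * cprod_ne n j (fun l => c - r l x) * cpolyN h (S n) c x = dRpoly n E c.
Proof.
  intros Hj Hc.
  assert (HW : is_deriveC (fun s => c + RtoC s) 0%R 1).
  { eapply is_deriveC_eq_val; [apply is_deriveC_plus; [apply is_deriveC_const | apply is_deriveC_RtoC]|].
    ring. }
  pose proof (is_deriveC_cprod_z n c (fun k => r (S k) x)) as HFz.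
  pose proof (is_deriveC_mult _ _ _ _ _ (is_deriveC_mult _ _ _ _ _ (is_deriveC_mult _ _ _ _ _ HW HW)
                  (is_deriveC_cpolyN_z g n c x)) (is_deriveC_cpolyN_z g n c x)) as HGG.
  pose proof (is_deriveC_mult _ _ _ _ _ (is_deriveC_mult _ _ _ _ _ HW HFz)
                  (is_deriveC_cpolyN_z h (S n) c x)) as HFH.
  pose proof (is_deriveC_plus _ _ _ _ _ HGG HFH) as Hlhs; clear HGG HFH.
  apply (is_deriveC_ext _ (fun s => Rpoly n E (c + RtoC s))) in Hlhs; [|intros; apply curve].
  pose proof (is_deriveC_unique _ _ _ _ Hlhs (is_deriveC_cprod_z (2 * n + 1) c E)) as Hz.
  cbv beta in Hz; replace (c + RtoC 0) with c in Hz by ring.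
  rewrite (cprod_derive_at_root n j c (fun l => r l x)) in Hz by assumption.
  subst c; rewrite (cprod_at_root n j (fun l => r l x)) in Hz by exact Hj.
  unfold dRpoly, Rpoly; rewrite <- Hz; ring.
Qed.

Lemma zeros_y_is_deriveC j x :
  (1 <= j <= n)%nat -> Om x ->
  is_deriveC (fun t => - r j t * cpolyN g n (r j t) t) x
    (- Ci * dRpoly n E (r j x) / cprod_ne n j (fun l => r j x - r l x)).
Proof.
  intros Hj Hx.
  assert (HP : cprod_ne n j (fun l => r j x - r l x) <> 0).
  { apply cprod_ne_distinct_neq0 with (b := fun l => r l x).
    intros l Hl Hne; apply r_distinct; auto. }
  assert (HGx : cpolyN (fun k => DeriveC (g k)) n (r j x) x = Ci * cpolyN h (S n) (r j x) x).
  { rewrite (is_deriveC_unique _ _ _ _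
      (is_deriveC_cpolyN_x g (fun k => DeriveC (g k)) n (r j x) x
         (fun k => smoothC_is_deriveC (g k) x (g_smooth k))) (G_x (r j x) x)).
    rewrite (cprod_at_root n j (fun l => r l x)) by exact Hj; ring. }
  eapply is_deriveC_eq_val.
  - apply is_deriveC_mult; [apply is_deriveC_opp, zeros_is_deriveC; assumption|].
    apply (is_deriveC_cpolyN_comp g (fun k => DeriveC (g k)));
      [intros k; apply smoothC_is_deriveC, g_smooth | apply zeros_is_deriveC; assumption].
  - rewrite HGx, <- (curve_dz_at_zero j x (r j x)) by (reflexivity || exact Hj).
    unfold dubrovin_velocity; field; exact HP.
Qed.

Lemma zeros_dubrovin_solution :
  open Om -> dubrovin_solution n E Om (fun j x => (r j x, - r j x * cpolyN g n (r j x) x)).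
Proof.
  intros HO j Hj; cbn [fst snd]; split; [|split].
  - apply CkC_on_smoothC_on; [exact HO|]; intros k; apply zeros_CkC_on, Hj.
  - apply CkC_on_smoothC_on; [exact HO|]; intros k.
    apply CkC_on_mult; [apply CkC_on_opp, zeros_CkC_on, Hj|].
    apply CkC_on_cpolyN_comp; [exact g_smooth | apply zeros_CkC_on, Hj].
  - intros x Hx; split; [|split; [|split]].
    + rewrite <- (curve (r j x) x), (cprod_at_root n j (fun l => r l x)) by exact Hj; ring.
    + intros l Hl Hne; apply r_distinct; auto.
    + exact (zeros_is_deriveC j x Hj Hx).
    + exact (zeros_y_is_deriveC j x Hj Hx).
Qed.

End Dubrovin_zeros.

(** * Uniqueness for the Dubrovin system *)

Definition close_on (lo hi : R) (rho : R -> R) (u v : R -> C) : Prop :=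
  (forall t, (lo <= t <= hi)%R -> continuousC_at u t /\ continuousC_at v t) /\
  exists L, forall t, (lo <= t <= hi)%R -> (Cmod (u t - v t) <= L * rho t)%R.

Section Segment_estimates.

Local Open Scope R_scope.

Lemma continuousC_bounded lo hi (u : R -> C) :
  (forall t, lo <= t <= hi -> continuousC_at u t) ->
  exists M, 0 <= M /\ forall t, lo <= t <= hi -> Cmod (u t) <= M.
Proof.
  intros Hu; destruct (Rle_dec lo hi) as [Hle|Hgt].
  - destruct (continuity_ab_maj (fun t => Cmod (u t)) lo hi Hle) as [tM [HtM _]].
    { intros t Ht; apply continuity_pt_Cmod, Hu, Ht. }
    exists (Cmod (u tM)); split; [apply Cmod_ge_0 | exact HtM].
  - exists 0; split; [lra|]; intros t Ht; lra.
Qed.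

Variables (lo hi : R) (rho : R -> R).

Lemma close_on_const (c : C) : close_on lo hi rho (fun _ => c) (fun _ => c).
Proof.
  split; [intros; split; apply continuousC_at_const|].
  exists 0; intros t _; replace (c - c)%C with (RtoC 0) by ring; rewrite Cmod_0; lra.
Qed.

Lemma close_on_plus (u u' v v' : R -> C) :
  close_on lo hi rho u u' -> close_on lo hi rho v v' ->
  close_on lo hi rho (fun t => u t + v t)%C (fun t => u' t + v' t)%C.
Proof.
  intros [Hcu [Lu Hu]] [Hcv [Lv Hv]]; split.
  - intros t Ht; destruct (Hcu t Ht), (Hcv t Ht); split; apply continuousC_at_plus; assumption.
  - exists (Lu + Lv); intros t Ht.
    replace (u t + v t - (u' t + v' t))%C with ((u t - u' t) + (v t - v' t))%C by ring.
    pose proof (Cmod_triangle (u t - u' t) (v t - v' t)); pose proof (Hu t Ht); pose proof (Hv t Ht).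
    lra.
Qed.

Lemma close_on_minus (u u' v v' : R -> C) :
  close_on lo hi rho u u' -> close_on lo hi rho v v' ->
  close_on lo hi rho (fun t => u t - v t)%C (fun t => u' t - v' t)%C.
Proof.
  intros Hu [Hcv [Lv Hv]]; apply close_on_plus; [exact Hu|split].
  - intros t Ht; destruct (Hcv t Ht); split; apply continuousC_at_opp; assumption.
  - exists Lv; intros t Ht.
    replace (- v t - - v' t)%C with (- (v t - v' t))%C by ring; rewrite Cmod_opp; apply Hv, Ht.
Qed.

Lemma close_on_mult (u u' v v' : R -> C) :
  close_on lo hi rho u u' -> close_on lo hi rho v v' ->
  close_on lo hi rho (fun t => u t * v t)%C (fun t => u' t * v' t)%C.
Proof.
  intros [Hcu [Lu Hu]] [Hcv [Lv Hv]]; split.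
  - intros t Ht; destruct (Hcu t Ht), (Hcv t Ht); split; apply continuousC_at_mult; assumption.
  - destruct (continuousC_bounded lo hi v) as [Mv [HMv Hbv]]; [intros t Ht; apply Hcv, Ht|].
    destruct (continuousC_bounded lo hi u') as [Mu [HMu Hbu]]; [intros t Ht; apply Hcu, Ht|].
    exists (Lu * Mv + Mu * Lv); intros t Ht.
    replace (u t * v t - u' t * v' t)%C with ((u t - u' t) * v t + u' t * (v t - v' t))%C by ring.
    eapply Rle_trans; [apply Cmod_triangle|]; rewrite !Cmod_mult.
    pose proof (Hu t Ht); pose proof (Hv t Ht); pose proof (Hbv t Ht); pose proof (Hbu t Ht).
    pose proof (Cmod_ge_0 (u t - u' t)); pose proof (Cmod_ge_0 (v t - v' t)).
    pose proof (Cmod_ge_0 (v t)); pose proof (Cmod_ge_0 (u' t)).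
    nra.
Qed.

Lemma close_on_inv (u u' : R -> C) :
  (forall t, lo <= t <= hi -> u t <> 0%C /\ u' t <> 0%C) ->
  close_on lo hi rho u u' -> close_on lo hi rho (fun t => / u t)%C (fun t => / u' t)%C.
Proof.
  intros Hnz [Hcu [Lu Hu]].
  assert (Hci : forall t, lo <= t <= hi -> continuousC_at (fun t => / u t)%C t /\
                                           continuousC_at (fun t => / u' t)%C t).
  { intros t Ht; destruct (Hcu t Ht), (Hnz t Ht); split; apply continuousC_at_inv; assumption. }
  split; [exact Hci|].
  destruct (continuousC_bounded lo hi (fun t => / u t)%C) as [M [HM Hb]]; [intros t Ht; apply Hci, Ht|].
  destruct (continuousC_bounded lo hi (fun t => / u' t)%C) as [M' [HM' Hb']];
    [intros t Ht; apply Hci, Ht|].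
  exists (Lu * M * M'); intros t Ht; destruct (Hnz t Ht) as [Hu0 Hu0'].
  replace (/ u t - / u' t)%C with (- (u t - u' t) * / u t * / u' t)%C by (field; auto).
  rewrite !Cmod_mult, Cmod_opp.
  pose proof (Hu t Ht); pose proof (Hb t Ht); pose proof (Hb' t Ht).
  pose proof (Cmod_ge_0 (u t - u' t)); pose proof (Cmod_ge_0 (/ u t)%C); pose proof (Cmod_ge_0 (/ u' t)%C).
  apply Rle_trans with (Lu * rho t * M * M'); [|right; ring].
  apply Rmult_le_compat; [apply Rmult_le_pos; assumption | assumption | | assumption].
  apply Rmult_le_compat; assumption.
Qed.

Lemma close_on_csum m (a b : nat -> R -> C) :
  (forall k, (k < m)%nat -> close_on lo hi rho (a k) (b k)) ->
  close_on lo hi rho (fun t => csum m (fun k => a k t)) (fun t => csum m (fun k => b k t)).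
Proof.
  induction m as [|m IH]; intros Hab; simpl; [apply close_on_const|].
  apply close_on_plus; [apply IH; intros; apply Hab|apply Hab]; lia.
Qed.

Lemma close_on_cprod m (a b : nat -> R -> C) :
  (forall k, (k < m)%nat -> close_on lo hi rho (a k) (b k)) ->
  close_on lo hi rho (fun t => cprod m (fun k => a k t)) (fun t => cprod m (fun k => b k t)).
Proof.
  induction m as [|m IH]; intros Hab; simpl; [apply close_on_const|].
  apply close_on_mult; [apply IH; intros; apply Hab|apply Hab]; lia.
Qed.

End Segment_estimates.

Section Uniqueness.

Local Open Scope R_scope.

Fixpoint rsum (m : nat) (f : nat -> R) : R :=
  match m with O => 0 | S k => rsum k f + f k end.

Lemma rsum_nonneg m f : (forall k, (k < m)%nat -> 0 <= f k) -> 0 <= rsum m f.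
Proof.
  induction m as [|m IH]; intros Hf; simpl; [lra|].
  pose proof (IH (fun k Hk => Hf k ltac:(lia))); pose proof (Hf m ltac:(lia)); lra.
Qed.

Lemma rsum_term_le m f k0 :
  (forall k, (k < m)%nat -> 0 <= f k) -> (k0 < m)%nat -> f k0 <= rsum m f.
Proof.
  induction m as [|m IH]; intros Hf Hk0; simpl; [lia|].
  pose proof (rsum_nonneg m f (fun k Hk => Hf k ltac:(lia))); pose proof (Hf m ltac:(lia)).
  destruct (Nat.eq_dec k0 m) as [->|Hne]; [lra|].
  pose proof (IH (fun k Hk => Hf k ltac:(lia)) ltac:(lia)); lra.
Qed.

Lemma rsum_eq0 m f : (forall k, (k < m)%nat -> f k = 0) -> rsum m f = 0.
Proof.
  induction m as [|m IH]; intros Hf; simpl; [reflexivity|].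
  rewrite IH, (Hf m) by (lia || (intros; apply Hf; lia)); ring.
Qed.

Lemma Rabs_rsum_le m f c : (forall k, (k < m)%nat -> Rabs (f k) <= c) -> Rabs (rsum m f) <= INR m * c.
Proof.
  induction m as [|m IH]; intros Hf; simpl rsum; [rewrite Rabs_R0; simpl; lra|].
  rewrite S_INR; eapply Rle_trans; [apply Rabs_triang|].
  pose proof (IH (fun k Hk => Hf k ltac:(lia))); pose proof (Hf m ltac:(lia)); lra.
Qed.

Lemma is_derive_rsum m (f : nat -> R -> R) df t :
  (forall k, (k < m)%nat -> is_derive (f k) t (df k)) ->
  is_derive (fun s => rsum m (fun k => f k s)) t (rsum m df).
Proof.
  induction m as [|m IH]; intros Hf; simpl; [exact (is_derive_const _ t)|].
  exact (is_derive_plus _ _ _ _ _ (IH (fun k Hk => Hf k ltac:(lia))) (Hf m ltac:(lia))).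
Qed.

Lemma uniform_bound m (P : nat -> R -> Prop) :
  (forall k L L', L <= L' -> P k L -> P k L') ->
  (forall k, (k < m)%nat -> exists L, P k L) -> exists L, forall k, (k < m)%nat -> P k L.
Proof.
  intros Hmono; induction m as [|m IH]; intros Hex; [exists 0; intros; lia|].
  destruct IH as [L1 H1]; [intros; apply Hex; lia|].
  destruct (Hex m) as [L2 H2]; [lia|].
  exists (Rmax L1 L2); intros k Hk; destruct (Nat.eq_dec k m) as [->|Hne].
  - apply (Hmono m L2); [apply Rmax_r | exact H2].
  - apply (Hmono k L1); [apply Rmax_l | apply H1; lia].
Qed.

Definition Cnorm2 (z : C) : R := Re z * Re z + Im z * Im z.
Definition Cdot (a b : C) : R := Re a * Re b + Im a * Im b.

Lemma Cnorm2_nonneg z : 0 <= Cnorm2 z.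
Proof. unfold Cnorm2; nra. Qed.

Lemma Cnorm2_le0 z : Cnorm2 z <= 0 -> z = 0%C.
Proof. unfold Cnorm2, Re, Im; intros; apply injective_projections; simpl; nra. Qed.

Lemma Cmod_le_sqrt z D : Cnorm2 z <= D -> Cmod z <= sqrt D.
Proof. intros H; unfold Cmod; apply sqrt_le_1_alt; unfold Cnorm2, Re, Im in H; lra. Qed.

Lemma Rabs_Cdot_le a b : Rabs (Cdot a b) <= Cmod a * Cmod b.
Proof.
  replace (Cdot a b) with (Re (Cconj a * b)) by (unfold Cdot, Cconj, Re, Im; simpl; ring).
  rewrite <- Cmod_conj, <- Cmod_mult; apply re_le_Cmod.
Qed.

Lemma is_derive_Cnorm2 (g : R -> C) t l :
  is_deriveC g t l -> is_derive (fun s => Cnorm2 (g s)) t (2 * Cdot (g t) l).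
Proof.
  intros [Hr Hi]; unfold Cnorm2, Cdot.
  replace (2 * (Re (g t) * Re l + Im (g t) * Im l)) with
    ((Re l * Re (g t) + Re (g t) * Re l) + (Im l * Im (g t) + Im (g t) * Im l)) by ring.
  exact (is_derive_plus _ _ _ _ _ (is_derive_Rmult _ _ _ _ _ Hr Hr) (is_derive_Rmult _ _ _ _ _ Hi Hi)).
Qed.

(* With s the sign of x1 - x0, t |-> D t * exp (- K s (t - x0)) does not increase from x0
   to x1. *)
Lemma gronwall_vanishing (D : R -> R) K x0 x1 :
  (forall t, Rmin x0 x1 <= t <= Rmax x0 x1 ->
     ex_derive D t /\ 0 <= D t /\ Rabs (Derive D t) <= K * D t) ->
  D x0 = 0 -> D x1 = 0.
Proof.
  intros HD H0.
  set (s := if Rlt_dec x0 x1 then 1 else -1).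
  assert (Hs : s * (x1 - x0) = Rabs (x1 - x0)).
  { unfold s; destruct (Rlt_dec x0 x1); [rewrite Rabs_right | rewrite Rabs_left1]; lra. }
  set (w := fun t => exp (- (K * s * (t - x0)))).
  assert (Hw : forall t, is_derive w t (w t * - (K * s))).
  { intros t; unfold w; cbv beta; auto_derive; [exact I | unfold Rminus; ring]. }
  set (de := fun t => Derive D t * w t + D t * (w t * - (K * s))).
  destruct (MVT_gen (fun t => D t * w t) x0 x1 de) as [c [Hc Hmvt]].
  - intros t Ht; destruct (HD t) as [Hex _]; [lra|].
    exact (is_derive_Rmult D w _ _ _ (Derive_correct _ _ Hex) (Hw t)).
  - intros t Ht; destruct (HD t Ht) as [Hex _].
    exact (is_derive_continuity_pt _ _ _ (is_derive_Rmult D w _ _ _ (Derive_correct _ _ Hex) (Hw t))).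
  - destruct (HD c Hc) as [_ [Hc0 Hcb]]; destruct (HD x1) as [_ [Hx1 _]];
      [split; [apply Rmin_r | apply Rmax_r]|].
    assert (Hw1 : 0 < w x1) by apply exp_pos; assert (Hwc : 0 < w c) by apply exp_pos.
    assert (Hneg : de c * (x1 - x0) <= 0).
    { unfold de; replace ((Derive D c * w c + D c * (w c * - (K * s))) * (x1 - x0)) with
        (w c * (Derive D c * (x1 - x0) - K * D c * (s * (x1 - x0)))) by ring.
      rewrite Hs; pose proof (Rle_abs (Derive D c * (x1 - x0))).
      rewrite Rabs_mult in *.
      pose proof (Rabs_pos (x1 - x0)).
      assert (Rabs (Derive D c) * Rabs (x1 - x0) <= K * D c * Rabs (x1 - x0))
        by (apply Rmult_le_compat_r; assumption).
      nra. }
    rewrite H0, Rmult_0_l in Hmvt; nra.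
Qed.

Definition dubrovin_z_field (n : nat) (p : nat -> C * C) (j : nat) : C :=
  (- (2 * Ci) * snd (p j) / dub_denom n p j)%C.
Definition dubrovin_y_field (n : nat) (E : nat -> C) (p : nat -> C * C) (j : nat) : C :=
  (- Ci * dRpoly n E (fst (p j)) / dub_denom n p j)%C.

Lemma close_on_dubrovin_fields n E lo hi rho (p q : nat -> R -> C * C) l :
  (1 <= l <= n)%nat ->
  (forall m, (1 <= m <= n)%nat ->
     close_on lo hi rho (fun t => fst (p m t)) (fun t => fst (q m t)) /\
     close_on lo hi rho (fun t => snd (p m t)) (fun t => snd (q m t))) ->
  (forall t, lo <= t <= hi ->
     dub_denom n (fun k => p k t) l <> 0%C /\ dub_denom n (fun k => q k t) l <> 0%C) ->
  close_on lo hi rho (fun t => dubrovin_z_field n (fun k => p k t) l)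
                   (fun t => dubrovin_z_field n (fun k => q k t) l) /\
  close_on lo hi rho (fun t => dubrovin_y_field n E (fun k => p k t) l)
                   (fun t => dubrovin_y_field n E (fun k => q k t) l).
Proof.
  intros Hl Hpq Hnz.
  assert (Hden : close_on lo hi rho (fun t => dub_denom n (fun k => p k t) l)
                                  (fun t => dub_denom n (fun k => q k t) l)).
  { apply (close_on_cprod lo hi rho n
      (fun k t => if Nat.eqb (S k) l then 1%C else (fst (p l t) - fst (p (S k) t))%C)
      (fun k t => if Nat.eqb (S k) l then 1%C else (fst (q l t) - fst (q (S k) t))%C)).
    intros k Hk; destruct (Nat.eqb (S k) l); [apply close_on_const|].
    apply close_on_minus; apply Hpq; lia. }
  split; apply close_on_mult; try (apply close_on_inv; assumption);
    apply close_on_mult; try apply close_on_const.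
  - apply Hpq, Hl.
  - apply (close_on_csum lo hi rho (2 * n + 1)
      (fun m t => cprod (2 * n + 1) (fun k => if Nat.eqb k m then 1 else fst (p l t) - E k)%C)
      (fun m t => cprod (2 * n + 1) (fun k => if Nat.eqb k m then 1 else fst (q l t) - E k)%C)).
    intros m Hm; apply close_on_cprod; intros k Hk; destruct (Nat.eqb k m); [apply close_on_const|].
    apply close_on_minus; [apply Hpq, Hl | apply close_on_const].
Qed.

Lemma dubrovin_solution_at n E Om p j x :
  dubrovin_solution n E Om p -> (1 <= j <= n)%nat -> Om x ->
  continuousC_at (fun t => fst (p j t)) x /\ continuousC_at (fun t => snd (p j t)) x /\
  dub_denom n (fun k => p k x) j <> 0%C.
Proof.
  intros Hp Hj Hx; destruct (Hp j Hj) as [_ [_ H]]; destruct (H x Hx) as [_ [Hd [Dz Dy]]].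
  split; [|split]; [eapply is_deriveC_continuous; eassumption .. |].
  apply cprod_ne_distinct_neq0 with (b := fun l => fst (p l x)); exact Hd.
Qed.

Definition dubrovin_gap (n : nat) (p q : nat -> R -> C * C) (t : R) : R :=
  rsum n (fun k => Cnorm2 (fst (p (S k) t) - fst (q (S k) t))%C
                   + Cnorm2 (snd (p (S k) t) - snd (q (S k) t))%C).

Lemma dubrovin_gap_nonneg n p q t : 0 <= dubrovin_gap n p q t.
Proof.
  apply rsum_nonneg; intros k _.
  pose proof (Cnorm2_nonneg (fst (p (S k) t) - fst (q (S k) t))%C).
  pose proof (Cnorm2_nonneg (snd (p (S k) t) - snd (q (S k) t))%C); lra.
Qed.

Lemma dubrovin_gap_ge n p q t l :
  (1 <= l <= n)%nat ->
  Cnorm2 (fst (p l t) - fst (q l t))%C <= dubrovin_gap n p q t /\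
  Cnorm2 (snd (p l t) - snd (q l t))%C <= dubrovin_gap n p q t.
Proof.
  intros Hl.
  assert (Hterm := rsum_term_le n (fun k => Cnorm2 (fst (p (S k) t) - fst (q (S k) t))%C
                     + Cnorm2 (snd (p (S k) t) - snd (q (S k) t))%C) (pred l)).
  assert (Hle := Hterm (fun k _ => Rplus_le_le_0_compat _ _ (Cnorm2_nonneg _) (Cnorm2_nonneg _))
                     ltac:(lia)).
  cbv beta in Hle; replace (S (pred l)) with l in Hle by lia.
  pose proof (Cnorm2_nonneg (fst (p l t) - fst (q l t))%C).
  pose proof (Cnorm2_nonneg (snd (p l t) - snd (q l t))%C).
  unfold dubrovin_gap; lra.
Qed.

Lemma Rabs_gap_term_le (a b c d : C) s L :
  Cmod a <= s -> Cmod b <= L * s -> Cmod c <= s -> Cmod d <= L * s ->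
  Rabs (2 * Cdot a b + 2 * Cdot c d) <= 4 * L * (s * s).
Proof.
  intros Ha Hb Hc Hd.
  pose proof (Rabs_Cdot_le a b); pose proof (Rabs_Cdot_le c d).
  pose proof (Cmod_ge_0 a); pose proof (Cmod_ge_0 b); pose proof (Cmod_ge_0 c); pose proof (Cmod_ge_0 d).
  assert (Cmod a * Cmod b <= s * (L * s)) by (apply Rmult_le_compat; assumption).
  assert (Cmod c * Cmod d <= s * (L * s)) by (apply Rmult_le_compat; assumption).
  eapply Rle_trans; [apply Rabs_triang|]; rewrite !Rabs_mult, Rabs_right by lra.
  nra.
Qed.

(* Each coordinate difference is at most sqrt gap, and [close_on] carries such bounds
   through the rational expressions defining the field. *)
Lemma dubrovin_fields_lipschitz n E Om (p q : nat -> R -> C * C) lo hi :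
  (forall t, lo <= t <= hi -> Om t) ->
  dubrovin_solution n E Om p -> dubrovin_solution n E Om q ->
  exists L, forall k, (k < n)%nat -> forall t, lo <= t <= hi ->
    Cmod (dubrovin_z_field n (fun i => p i t) (S k) - dubrovin_z_field n (fun i => q i t) (S k))%C
      <= L * sqrt (dubrovin_gap n p q t) /\
    Cmod (dubrovin_y_field n E (fun i => p i t) (S k) - dubrovin_y_field n E (fun i => q i t) (S k))%C
      <= L * sqrt (dubrovin_gap n p q t).
Proof.
  intros Hseg Hp Hq.
  set (rho := fun t => sqrt (dubrovin_gap n p q t)).
  assert (Hrho : forall t, 0 <= rho t) by (intros; apply sqrt_pos).
  assert (Hbase : forall m, (1 <= m <= n)%nat ->
     close_on lo hi rho (fun t => fst (p m t)) (fun t => fst (q m t)) /\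
     close_on lo hi rho (fun t => snd (p m t)) (fun t => snd (q m t))).
  { intros m Hm; split; split.
    1,3: intros t Ht; destruct (dubrovin_solution_at n E Om p m t Hp Hm (Hseg t Ht)) as [? [? _]];
         destruct (dubrovin_solution_at n E Om q m t Hq Hm (Hseg t Ht)) as [? [? _]]; split; assumption.
    all: exists 1; intros t _; rewrite Rmult_1_l; apply Cmod_le_sqrt, dubrovin_gap_ge, Hm. }
  apply uniform_bound.
  - intros k L L' HLL' H t Ht; destruct (H t Ht).
    pose proof (Rmult_le_compat_r _ _ _ (Hrho t) HLL'); unfold rho in *; split; lra.
  - intros k Hk.
    destruct (close_on_dubrovin_fields n E lo hi rho p q (S k)) as [[_ [Lz Hz]] [_ [Ly Hy]]];
      [lia | exact Hbase | |].
    { intros t Ht; split; apply (dubrovin_solution_at n E Om); auto; lia. }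
    exists (Rmax Lz Ly); intros t Ht.
    pose proof (Rmult_le_compat_r _ _ _ (Hrho t) (Rmax_l Lz Ly)).
    pose proof (Rmult_le_compat_r _ _ _ (Hrho t) (Rmax_r Lz Ly)).
    pose proof (Hz t Ht); pose proof (Hy t Ht); unfold rho in *; split; lra.
Qed.

Lemma dubrovin_gap_estimate n E Om (p q : nat -> R -> C * C) lo hi :
  (forall t, lo <= t <= hi -> Om t) ->
  dubrovin_solution n E Om p -> dubrovin_solution n E Om q ->
  exists K, forall t, lo <= t <= hi ->
    ex_derive (dubrovin_gap n p q) t /\
    Rabs (Derive (dubrovin_gap n p q) t) <= K * dubrovin_gap n p q t.
Proof.
  intros Hseg Hp Hq.
  destruct (dubrovin_fields_lipschitz n E Om p q lo hi Hseg Hp Hq) as [L HL].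
  exists (INR n * (4 * L)); intros t Ht.
  assert (Hd : is_derive (dubrovin_gap n p q) t (rsum n (fun k =>
     2 * Cdot (fst (p (S k) t) - fst (q (S k) t))%C
       (dubrovin_z_field n (fun i => p i t) (S k) - dubrovin_z_field n (fun i => q i t) (S k))%C
   + 2 * Cdot (snd (p (S k) t) - snd (q (S k) t))%C
       (dubrovin_y_field n E (fun i => p i t) (S k) - dubrovin_y_field n E (fun i => q i t) (S k))%C))).
  { apply is_derive_rsum; intros k Hk.
    destruct (Hp (S k) ltac:(lia)) as [_ [_ Hpk]]; destruct (Hpk t (Hseg t Ht)) as [_ [_ [Hpz Hpy]]].
    destruct (Hq (S k) ltac:(lia)) as [_ [_ Hqk]]; destruct (Hqk t (Hseg t Ht)) as [_ [_ [Hqz Hqy]]].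
    exact (is_derive_plus _ _ _ _ _ (is_derive_Cnorm2 _ _ _ (is_deriveC_minus _ _ _ _ _ Hpz Hqz))
                                    (is_derive_Cnorm2 _ _ _ (is_deriveC_minus _ _ _ _ _ Hpy Hqy))). }
  split; [eexists; exact Hd|]; rewrite (is_derive_unique _ _ _ Hd).
  set (rho := sqrt (dubrovin_gap n p q t)).
  replace (INR n * (4 * L) * dubrovin_gap n p q t) with (INR n * (4 * L * (rho * rho)))
    by (unfold rho; rewrite sqrt_sqrt by apply dubrovin_gap_nonneg; ring).
  apply Rabs_rsum_le; intros k Hk; destruct (HL k Hk t Ht) as [Hz Hy].
  destruct (dubrovin_gap_ge n p q t (S k)) as [Hgz Hgy]; [lia|].
  apply Rabs_gap_term_le; try assumption; apply Cmod_le_sqrt; assumption.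
Qed.

Definition is_interval (Om : R -> Prop) : Prop :=
  forall x0 x1 t, Om x0 -> Om x1 -> Rmin x0 x1 <= t <= Rmax x0 x1 -> Om t.

Lemma dubrovin_solution_unique n E Om (p q : nat -> R -> C * C) x0 :
  is_interval Om -> Om x0 -> dubrovin_solution n E Om p -> dubrovin_solution n E Om q ->
  (forall j, (1 <= j <= n)%nat -> p j x0 = q j x0) ->
  forall j x, (1 <= j <= n)%nat -> Om x -> p j x = q j x.
Proof.
  intros Hconv Hx0 Hp Hq H0 j x Hj Hx.
  destruct (dubrovin_gap_estimate n E Om p q (Rmin x0 x) (Rmax x0 x)) as [K HK];
    [intros; apply (Hconv x0 x); assumption | exact Hp | exact Hq |].
  assert (Hgap : dubrovin_gap n p q x = 0).
  { apply (gronwall_vanishing _ K x0 x).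
    - intros t Ht; destruct (HK t Ht); split; [|split]; try assumption; apply dubrovin_gap_nonneg.
    - apply rsum_eq0; intros k Hk; rewrite H0 by lia.
      replace (fst (q (S k) x0) - fst (q (S k) x0))%C with (RtoC 0) by ring.
      replace (snd (q (S k) x0) - snd (q (S k) x0))%C with (RtoC 0) by ring.
      unfold Cnorm2, Re, Im; simpl; ring. }
  destruct (dubrovin_gap_ge n p q x j Hj) as [Hz Hy]; rewrite Hgap in Hz, Hy.
  apply Cnorm2_le0 in Hz; apply Cnorm2_le0 in Hy.
  apply injective_projections; [replace (fst (p j x)) with (fst (p j x) - fst (q j x) + fst (q j x))%C
                                  by ring | replace (snd (p j x)) with (snd (p j x) - snd (q j x) + snd (q j x))%C
                                  by ring]; [rewrite Hz | rewrite Hy]; ring.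
Qed.

End Uniqueness.

Lemma open_rbar_interval_open a b : open (open_rbar_interval a b).
Proof.
  apply (open_and (T := R_UniformSpace) (fun x => Rbar_lt a x) (fun x => Rbar_lt x b));
    [apply open_Rbar_gt | apply open_Rbar_lt].
Qed.

Lemma open_rbar_interval_is_interval a b : is_interval (open_rbar_interval a b).
Proof.
  intros x0 x1 t [Ha0 Hb0] [Ha1 Hb1] [Hlo Hhi]; split.
  - apply Rbar_lt_le_trans with (Rmin x0 x1); [|exact Hlo].
    apply (Rmin_case x0 x1 (fun m => Rbar_lt a m)); assumption.
  - apply Rbar_le_lt_trans with (Rmax x0 x1); [exact Hhi|].
    apply (Rmax_case x0 x1 (fun m => Rbar_lt m b)); assumption.
Qed.

Lemma dubrovin_zeros_conclusion n E (r g h : nat -> R -> C) (alpha : R -> C) Om :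
  open Om -> is_interval Om ->
  (forall k, smoothC (g k)) ->
  (forall z x, is_deriveC (fun t => cprod n (fun k => z - r (S k) t)) x
     (alpha x * cprod n (fun k => z - r (S k) x) - 2 * Ci * z * cpolyN g n z x)) ->
  (forall z x, is_deriveC (fun t => cpolyN g n z t) x
     (Ci * (cpolyN h (S n) z x - cprod n (fun k => z - r (S k) x)))) ->
  (forall z x, z * z * cpolyN g n z x * cpolyN g n z x
     + z * cprod n (fun k => z - r (S k) x) * cpolyN h (S n) z x = Rpoly n E z) ->
  (forall j x, (1 <= j <= n)%nat -> Om x -> continuousC_at (r j) x) ->
  (forall j l x, (1 <= j <= n)%nat -> (1 <= l <= n)%nat -> j <> l -> Om x -> r j x <> r l x) ->
  lemma_conclusion n E Om r (fun j x => (r j x, - r j x * cpolyN g n (r j x) x)).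
Proof.
  intros HO HI Hg HF HG Hcurve Hc Hd.
  assert (Hsol := zeros_dubrovin_solution n E r g h alpha Om Hg HF HG Hcurve Hc Hd HO).
  split; [|split; [exact Hsol|]].
  - intros j x Hj Hx; exact (zeros_is_deriveC n r g alpha Om HF Hc Hd j x Hj Hx).
  - intros x0 p Hx0 Hp Heq; apply (dubrovin_solution_unique n E Om p _ x0); assumption.
Qed.

Theorem lemma3p2
  (n : nat) (u : R -> C) (f g h : nat -> R -> C) (E : nat -> C)
  (mu nu : nat -> R -> C) (a b : Rbar) :
  smoothC u ->
  (forall k, smoothC (f k)) -> (forall k, smoothC (g k)) -> (forall k, smoothC (h k)) ->
  (forall x, f 0%nat x = 1) -> (forall x, h 0%nat x = 1) ->
  (forall z x, is_deriveC (fun t => cpolyN f (S n) z t) x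
     (- Ci * DeriveC u x * cpolyN f (S n) z x - 2 * Ci * z * cpolyN g n z x)) ->
  (forall z x, is_deriveC (fun t => cpolyN h (S n) z t) x
     (Ci * DeriveC u x * cpolyN h (S n) z x + 2 * Ci * z * cpolyN g n z x)) ->
  (forall z x, is_deriveC (fun t => cpolyN g n z t) x
     (Ci * (cpolyN h (S n) z x - cpolyN f (S n) z x))) ->
  (forall z x, z * z * cpolyN g n z x * cpolyN g n z x
                 + z * cpolyN f (S n) z x * cpolyN h (S n) z x = Rpoly n E z) ->
  E 0%nat = 0 ->
  (forall p q, (p <= 2 * n)%nat -> (q <= 2 * n)%nat -> E p = E q -> p = q) ->
  (forall z x, cpolyN f (S n) z x = cprod n (fun k => z - mu (S k) x)) ->
  (forall z x, cpolyN h (S n) z x = cprod n (fun k => z - nu (S k) x)) ->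
  ((forall j x, (1 <= j <= n)%nat -> open_rbar_interval a b x -> continuousC_at (mu j) x) ->
   (forall j l x, (1 <= j <= n)%nat -> (1 <= l <= n)%nat -> j <> l ->
      open_rbar_interval a b x -> mu j x <> mu l x) ->
   lemma_conclusion n E (open_rbar_interval a b) mu
     (fun j x => (mu j x, - mu j x * cpolyN g n (mu j x) x)))
  /\
  ((forall j x, (1 <= j <= n)%nat -> open_rbar_interval a b x -> continuousC_at (nu j) x) ->
   (forall j l x, (1 <= j <= n)%nat -> (1 <= l <= n)%nat -> j <> l ->
      open_rbar_interval a b x -> nu j x <> nu l x) ->
   lemma_conclusion n E (open_rbar_interval a b) nu
     (fun j x => (nu j x, nu j x * cpolyN g n (nu j x) x))).
Proof.
  intros _ _ Hg _ _ _ HFx HHx HGx Hcurve _ _ HF HH.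
  pose proof (open_rbar_interval_open a b) as HO.
  pose proof (open_rbar_interval_is_interval a b) as HI.
  split; intros Hc Hd.
  - apply (dubrovin_zeros_conclusion n E mu g h (fun x => - Ci * DeriveC u x)); try assumption.
    + intros z x; rewrite <- HF; exact (is_deriveC_ext _ _ _ _ (HF z) (HFx z x)).
    + intros z x; rewrite <- HF; apply HGx.
    + intros z x; rewrite <- HF; apply Hcurve.
  - (* The nu-family is the mu-family of the triple (H, -G, F). *)
    replace (fun j x => (nu j x, nu j x * cpolyN g n (nu j x) x)) with
      (fun j x => (nu j x, - nu j x * cpolyN (fun k t => - g k t) n (nu j x) x))
      by (do 2 (apply functional_extensionality; intro); rewrite cpolyN_opp; f_equal; ring).
    apply (dubrovin_zeros_conclusion n E nu (fun k t => - g k t) f (fun x => Ci * DeriveC u x));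
      try assumption.
    + intros k; apply smoothC_opp, Hg.
    + intros z x; rewrite <- HH, cpolyN_opp.
      eapply is_deriveC_eq_val; [exact (is_deriveC_ext _ _ _ _ (HH z) (HHx z x)) | ring].
    + intros z x; rewrite <- HH.
      eapply is_deriveC_eq_val.
      * apply (is_deriveC_ext (fun t => - cpolyN g n z t)); [intros; symmetry; apply cpolyN_opp|].
        apply is_deriveC_opp, HGx.
      * ring.
    + intros z x; rewrite <- HH, cpolyN_opp, <- (Hcurve z x); ring.
Qed.
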